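(* Let $\alpha>0$, $T:=T(\alpha)$, and let $\varphi_1,\dots,\varphi_T$ be positive reals with $\frac{T+1}{T}\le\varphi_k\le\frac{T}{T-1}$ for all $k$ (the upper bound being void when $T=1$) and $\prod_{j=1}^T\varphi_j=T/\alpha$; extend periodically by $\varphi_{T+j}:=\varphi_j$ for all $j\ge1$. Set $\psi_i:=\prod_{j=1}^i\varphi_j$ (with $\psi_0=1$) and $$a_t:=\max\Big\{\tfrac{T-i+t-1}{\alpha}\psi_i:\ 0\le i<T\Big\},\qquad t\ge1.$$ Let $(\chi_t)_{t\ge1}$ be defined by $\chi_t:=\max\{a_t,\frac{t-1}{\alpha}\chi_1,\dots,\frac1\alpha\chi_{t-1}\}$. Then $\chi_t=\psi_{t+T-1}=\prod_{j=1}^{t+T-1}\varphi_j$ for all $t\ge1$.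
   Context: For $\alpha>0$, let $T=T(\alpha)\in\mathbb N$ be the unique positive integer with $\frac{(T-1)^T}{T^{T-1}}<\alpha\le\frac{T^{T+1}}{(T+1)^T}$, and define $\nu(\alpha):=\frac1T\log\frac T\alpha$. *)

From Stdlib Require Import Reals List.
Import ListNotations.
Open Scope R_scope.

Fixpoint psi (phi : nat -> R) (i : nat) : R :=
  match i with
  | O => 1
  | S k => psi phi k * phi (S k)
  end.

Definition a_seq (alpha : R) (T : nat) (phi : nat -> R) (t : nat) : R :=
  let f := fun i : nat => (INR T - INR i + INR t - 1) / alpha * psi phi i in
  fold_right Rmax (f O) (map f (seq 0 T)).

Definition chi_rec (alpha : R) (a chi : nat -> R) : Prop :=
  forall t : nat, (1 <= t)%nat ->
    chi t = fold_right Rmax (a t)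
              (map (fun s : nat => (INR t - INR s) / alpha * chi s) (seq 1 (t - 1))).

(* Proof idea.  Write psi_m = phi_1 ... phi_m.  The periodicity of phi and
   psi_T = T/alpha give psi_(T+m) = (T/alpha) psi_m.  The single estimate
   behind the theorem is

       (KEY)   d/alpha * psi_m <= psi_(m+d)      for all m, d.

   For d <= T it follows from the periodicity (the case d = T is an equality)
   by peeling off factors phi <= T/(T-1) one at a time; for d = T + r it
   follows from periodicity and the growth bound psi_(m+r) >= (1 + r/T) psi_m,
   a consequence of phi >= (T+1)/T.  By (KEY) every candidate in the maxima
   defining a_t and chi_t is at most psi_(t+T-1); and psi_(t+T-1) is itself a
   candidate: the term i = t-1 of a_t when t <= T, and the term s = t-T of the
   recursion (with chi_(t-T) = psi_(t-1) by induction) when t > T. *)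

From Stdlib Require Import Reals List Lra Lia Psatz Arith.
Open Scope R_scope.

Lemma fold_Rmax_le (x0 M : R) (l : list R) :
  x0 <= M -> (forall y, In y l -> y <= M) -> fold_right Rmax x0 l <= M.
Proof.
  induction l as [|a l IH]; simpl; intros H0 Hl; auto.
  apply Rmax_lub; auto.
Qed.

Lemma fold_Rmax_ge_init (x0 : R) (l : list R) : x0 <= fold_right Rmax x0 l.
Proof.
  induction l as [|a l IH]; simpl; [lra|].
  eapply Rle_trans; [exact IH | apply Rmax_r].
Qed.

Lemma fold_Rmax_ge_in (x0 y : R) (l : list R) :
  In y l -> y <= fold_right Rmax x0 l.
Proof.
  induction l as [|a l IH]; simpl; [tauto|].
  intros [<-|Hy]; [apply Rmax_l|].
  eapply Rle_trans; [exact (IH Hy) | apply Rmax_r].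
Qed.

Lemma Rdiv_mult_le (alpha c x y : R) :
  0 < alpha -> c * x <= alpha * y -> c / alpha * x <= y.
Proof.
  intros Ha H. apply Rmult_le_reg_l with alpha; auto.
  replace (alpha * (c / alpha * x)) with (c * x) by (field; lra). exact H.
Qed.

Section PeriodicProducts.

Variables (alpha : R) (T : nat) (phi : nat -> R).

Hypothesis alpha_pos : 0 < alpha.
Hypothesis T_pos : (1 <= T)%nat.
Hypothesis phi_bounds : forall k : nat, (1 <= k <= T)%nat ->
  0 < phi k /\ (INR T + 1) / INR T <= phi k /\
  ((1 < T)%nat -> phi k <= INR T / (INR T - 1)).
Hypothesis psi_T : psi phi T = INR T / alpha.
Hypothesis phi_periodic : forall j : nat, (1 <= j)%nat -> phi (T + j)%nat = phi j.

Lemma INR_T_ge_1 : 1 <= INR T.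
Proof. apply (le_INR 1); lia. Qed.

Lemma phi_bounds_all (k : nat) : (1 <= k)%nat ->
  0 < phi k /\ (INR T + 1) / INR T <= phi k /\
  ((1 < T)%nat -> phi k <= INR T / (INR T - 1)).
Proof.
  induction k as [k IH] using (well_founded_induction lt_wf); intro Hk.
  destruct (le_lt_dec k T) as [HkT|HkT].
  - apply phi_bounds; lia.
  - replace k with (T + (k - T))%nat by lia.
    rewrite phi_periodic by lia. apply IH; lia.
Qed.

Lemma phi_lower (k : nat) : (1 <= k)%nat -> INR T + 1 <= INR T * phi k.
Proof.
  intro Hk. destruct (phi_bounds_all k Hk) as [_ [Hlo _]].
  pose proof INR_T_ge_1.
  apply Rmult_le_compat_l with (r := INR T) in Hlo; [|lra].
  replace (INR T * ((INR T + 1) / INR T)) with (INR T + 1) in Hlo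
    by (field; lra).
  lra.
Qed.

Lemma phi_upper (k : nat) : (1 <= k)%nat -> (1 < T)%nat ->
  (INR T - 1) * phi k <= INR T.
Proof.
  intros Hk HT. destruct (phi_bounds_all k Hk) as [_ [_ Hup]].
  assert (HT2 : 2 <= INR T) by (apply (le_INR 2); lia).
  specialize (Hup HT).
  apply Rmult_le_compat_l with (r := INR T - 1) in Hup; [|lra].
  replace ((INR T - 1) * (INR T / (INR T - 1))) with (INR T) in Hup
    by (field; lra).
  exact Hup.
Qed.

Lemma psi_pos (m : nat) : 0 < psi phi m.
Proof.
  induction m as [|m IH]; simpl; [lra|].
  apply Rmult_lt_0_compat; auto. apply phi_bounds_all; lia.
Qed.

Lemma psi_period (m : nat) : psi phi (T + m) = psi phi m * (INR T / alpha).
Proof.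
  induction m as [|m IH].
  - rewrite Nat.add_0_r, psi_T. simpl. ring.
  - rewrite Nat.add_succ_r. simpl psi.
    replace (S (T + m)) with (T + S m)%nat by lia.
    rewrite phi_periodic by lia. rewrite IH. ring.
Qed.

(* Since every phi_k >= 1 + 1/T, psi grows at least linearly:
   psi_(m+r) >= (1 + r/T) psi_m. *)
Lemma psi_growth_lower (m r : nat) :
  psi phi m * (INR T + INR r) <= INR T * psi phi (m + r).
Proof.
  induction r as [|r IH].
  - rewrite Nat.add_0_r. simpl. lra.
  - rewrite Nat.add_succ_r, S_INR. simpl psi.
    pose proof INR_T_ge_1.
    pose proof (phi_lower (S (m + r)) ltac:(lia)) as Hphi.
    pose proof (psi_pos m). pose proof (psi_pos (m + r)).
    pose proof (pos_INR r).
    apply Rmult_le_reg_l with (INR T); [lra|].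
    (* T psi_m (T+r+1) <= psi_m (T+r)(T+1) <= T psi_(m+r) (T+1)
                       <= T psi_(m+r) * T phi_(m+r+1) *)
    apply Rle_trans with (psi phi m * (INR T + INR r) * (INR T + 1)); [nra|].
    apply Rle_trans with (INR T * psi phi (m + r) * (INR T + 1)).
    { apply Rmult_le_compat_r; lra. }
    replace (INR T * (INR T * (psi phi (m + r) * phi (S (m + r))))) with
      ((INR T * psi phi (m + r)) * (INR T * phi (S (m + r)))) by ring.
    apply Rmult_le_compat_l; nra.
Qed.

(* Removing one factor phi <= T/(T-1) from a range of length d+1 <= T. *)
Lemma psi_shorten (m d : nat) : (d < T)%nat ->
  INR (S d) * psi phi m <= alpha * psi phi (m + S d) ->
  INR d * psi phi m <= alpha * psi phi (m + d).
Proof.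
  intros HdT Hlong.
  (* for d = 0 there is nothing to prove; otherwise 1 <= d < T forces T > 1 *)
  destruct d as [|d'].
  { simpl. pose proof (psi_pos (m + 0)). nra. }
  set (d := S d') in *.
  rewrite Nat.add_succ_r in Hlong. simpl psi in Hlong.
  rewrite S_INR in Hlong.
  pose proof (phi_upper (S (m + d)) ltac:(lia) ltac:(lia)) as Hphi.
  assert (HdT' : INR d + 1 <= INR T) by (rewrite <- S_INR; apply le_INR; lia).
  set (X := alpha * psi phi (m + d)).
  assert (HX : 0 < X) by (apply Rmult_lt_0_compat; auto using psi_pos).
  replace (alpha * (psi phi (m + d) * phi (S (m + d)))) with
    (X * phi (S (m + d))) in Hlong by (unfold X; ring).
  pose proof (psi_pos m). pose proof (pos_INR d). pose proof INR_T_ge_1.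
  (* T d psi_m <= (T-1)(d+1) psi_m <= (T-1) X phi <= T X *)
  apply Rmult_le_reg_l with (INR T); [lra|].
  apply Rle_trans with ((INR T - 1) * ((INR d + 1) * psi phi m)); [nra|].
  apply Rle_trans with ((INR T - 1) * (X * phi (S (m + d)))); nra.
Qed.

Lemma psi_growth_short (m d : nat) : (d <= T)%nat ->
  INR d * psi phi m <= alpha * psi phi (m + d).
Proof.
  intro HdT. replace d with (T - (T - d))%nat by lia.
  induction (T - d)%nat as [|k IH].
  - rewrite Nat.sub_0_r, Nat.add_comm, psi_period.
    right. field. lra.
  - destruct (le_lt_dec (S k) T) as [Hk|Hk].
    + apply psi_shorten; [lia|].
      replace (S (T - S k)) with (T - k)%nat by lia. exact IH.
    + replace (T - S k)%nat with O by lia.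
      simpl. pose proof (psi_pos (m + 0)). nra.
Qed.

Lemma psi_growth_long (m r : nat) :
  INR (T + r) * psi phi m <= alpha * psi phi (m + (T + r)).
Proof.
  replace (m + (T + r))%nat with (T + (m + r))%nat by lia.
  rewrite psi_period, plus_INR.
  replace (alpha * (psi phi (m + r) * (INR T / alpha))) with
    (INR T * psi phi (m + r)) by (field; lra).
  pose proof (psi_growth_lower m r). lra.
Qed.

Lemma psi_key (m d : nat) : INR d / alpha * psi phi m <= psi phi (m + d).
Proof.
  apply Rdiv_mult_le; [exact alpha_pos|].
  destruct (le_lt_dec d T) as [HdT|HdT].
  - apply psi_growth_short; exact HdT.
  - replace d with (T + (d - T))%nat by lia. apply psi_growth_long.
Qed.

Lemma a_seq_le (t : nat) : (1 <= t)%nat ->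
  a_seq alpha T phi t <= psi phi (t + T - 1).
Proof.
  intro Ht.
  assert (Hterm : forall i, (i < T)%nat ->
    (INR T - INR i + INR t - 1) / alpha * psi phi i <= psi phi (t + T - 1)).
  { intros i Hi.
    replace (INR T - INR i + INR t - 1) with (INR (t + T - 1 - i)).
    - replace (t + T - 1)%nat with (i + (t + T - 1 - i))%nat at 2 by lia.
      apply psi_key.
    - rewrite !minus_INR, plus_INR by lia. simpl. ring. }
  unfold a_seq; cbv zeta. apply fold_Rmax_le.
  - apply Hterm; lia.
  - intros y Hy. apply in_map_iff in Hy. destruct Hy as [i [<- Hi]].
    apply in_seq in Hi. apply Hterm; lia.
Qed.

(* For t <= T the term i = t-1 of a_t equals psi_(t+T-1). *)
Lemma a_seq_ge (t : nat) : (1 <= t <= T)%nat ->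
  psi phi (t + T - 1) <= a_seq alpha T phi t.
Proof.
  intro Ht.
  apply Rle_trans with ((INR T - INR (t - 1) + INR t - 1) / alpha * psi phi (t - 1)).
  - replace (t + T - 1)%nat with (T + (t - 1))%nat by lia.
    rewrite psi_period, minus_INR by lia.
    right. simpl. field. lra.
  - unfold a_seq; cbv zeta. apply fold_Rmax_ge_in. apply in_map_iff.
    exists (t - 1)%nat. split; [reflexivity|]. apply in_seq; lia.
Qed.

End PeriodicProducts.

Theorem proposition2 (alpha : R) (T : nat) (phi chi : nat -> R) :
  0 < alpha ->
  (1 <= T)%nat ->
  (INR T - 1) ^ T / INR T ^ (T - 1) < alpha ->
  alpha <= INR T ^ (T + 1) / (INR T + 1) ^ T ->
  (forall k : nat, (1 <= k <= T)%nat ->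
     0 < phi k /\ (INR T + 1) / INR T <= phi k /\
     ((1 < T)%nat -> phi k <= INR T / (INR T - 1))) ->
  psi phi T = INR T / alpha ->
  (forall j : nat, (1 <= j)%nat -> phi (T + j)%nat = phi j) ->
  chi_rec alpha (a_seq alpha T phi) chi ->
  forall t : nat, (1 <= t)%nat -> chi t = psi phi (t + T - 1).
Proof.
  intros Ha HT _ _ Hphi HpsiT Hper Hchi.
  intro t; induction t as [t IH] using (well_founded_induction lt_wf); intro Ht.
  rewrite (Hchi t Ht). apply Rle_antisym.
  -
    apply fold_Rmax_le; [now apply (a_seq_le alpha T phi)|].
    intros y Hy. apply in_map_iff in Hy. destruct Hy as [s [<- Hs]].
    apply in_seq in Hs.
    rewrite (IH s ltac:(lia) ltac:(lia)), <- minus_INR by lia.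
    replace (t + T - 1)%nat with ((s + T - 1) + (t - s))%nat by lia.
    now apply (psi_key alpha T phi).
  - destruct (le_lt_dec t T) as [HtT|HtT].
    +
      eapply Rle_trans; [|apply fold_Rmax_ge_init].
      apply (a_seq_ge alpha T phi); auto; lia.
    + (* t > T: psi_(t+T-1) = T/alpha * chi_(t-T) is a candidate *)
      apply Rle_trans with ((INR t - INR (t - T)) / alpha * chi (t - T)%nat).
      * rewrite (IH (t - T)%nat ltac:(lia) ltac:(lia)).
        replace (t - T + T - 1)%nat with (t - 1)%nat by lia.
        replace (t + T - 1)%nat with (T + (t - 1))%nat by lia.
        rewrite (psi_period alpha T phi HT HpsiT Hper), minus_INR by lia.
        right. field. lra.
      * apply fold_Rmax_ge_in. apply in_map_iff.
        exists (t - T)%nat. split; [reflexivity|]. apply in_seq; lia.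
Qed.
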